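(* Let $n\ge 1$, $b\in\mathbb{R}^n$, and let $A\in\mathbb{R}^{n\times n}$ be symmetric with all eigenvalues $\lambda_i$ satisfying $0<\lambda_i<2$, $i=1,\dots,n$. Define $g(x)=x-(Ax-b)$ and $f(x)=g(x)-x=-(Ax-b)$. Let $\bar x_k\in\mathbb{R}^n$, $\bar d_k\in\mathbb{R}^n\setminus\{0\}$ and $\beta_k\in\mathbb{R}$ be arbitrary, and set $$x_{k+1}=\bar x_k+\beta_k\bar d_k,\qquad \hat\beta_k=\frac{\langle \bar d_k,\,g(x_{k+1})-\bar x_k\rangle}{\|\bar d_k\|^2},\qquad \hat x_{k+1}=\bar x_k+\hat\beta_k\bar d_k.$$ Then $$\|f(\hat x_{k+1})\|_{A^{-1}}\le \|f(x_{k+1})\|_{A^{-1}},$$ where $\|x\|_{A^{-1}}=\sqrt{x^\intercal A^{-1}x}$.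
   Context: $\|\cdot\|$ denotes the Euclidean norm on $\mathbb{R}^n$ and $\langle x,y\rangle=x^\intercal y$ the standard inner product. Since $A$ is symmetric positive definite, $\|x\|_{A^{-1}}=\sqrt{x^\intercal A^{-1}x}$ is a norm. In the paper, $\bar x_k$ and $\bar d_k=\bar y_k-\bar x_k$ arise from an Anderson acceleration step, and $\hat\beta_k$ is the value of $\beta$ minimizing $\|\bar x_k+\beta\bar d_k-g(x_{k+1})\|$. *)

From HB Require Import structures.
From mathcomp Require Import all_boot all_order all_algebra.
Set Implicit Arguments. Unset Strict Implicit. Unset Printing Implicit Defensive.
Import Order.TTheory GRing.Theory Num.Theory.
Local Open Scope ring_scope.

Definition dotv (R : ringType) (n : nat) (x y : 'cV[R]_n) : R := (x^T *m y) 0 0.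

Definition sqnorm (R : ringType) (n : nat) (x : 'cV[R]_n) : R := dotv x x.

Definition normAinv (R : rcfType) (n : nat) (A : 'M[R]_n) (x : 'cV[R]_n) : R :=
  Num.sqrt (dotv x (invmx A *m x)).

Definition gmap (R : ringType) (n : nat) (A : 'M[R]_n) (b x : 'cV[R]_n) : 'cV[R]_n :=
  x - (A *m x - b).
Definition fmap (R : ringType) (n : nat) (A : 'M[R]_n) (b x : 'cV[R]_n) : 'cV[R]_n :=
  gmap A b x - x.

From HB Require Import structures.
From mathcomp Require Import all_boot all_order all_algebra.
From mathcomp Require Import sesquilinear spectral complex.
From mathcomp Require Import ring.
Set Implicit Arguments.
Unset Strict Implicit.
Unset Printing Implicit Defensive.
Import Order.TTheory GRing.Theory Num.Theory.
Local Open Scope ring_scope.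

(* Along the line [xbar + t dbar] the residual is affine, [f = r - t A dbar], so
   [q t := |f|^2_{A^-1} = c - 2 t p + t^2 a] with [p = <dbar, r>] and
   [a = <dbar, A dbar>].  The projected step satisfies
   [betahat s = beta s + p - beta a] where [s = |dbar|^2], whence
   [q beta - q betahat = (betahat - beta)^2 (2 s - a)], which is nonnegative
   because the eigenvalues of [A] are below [2].  That Rayleigh bound comes from
   the spectral theorem applied to [A] viewed as a complex hermitian matrix. *)

Section Dot.
Variables (R : comNzRingType) (n : nat).
Implicit Types (x y z : 'cV[R]_n).

Lemma dotvDr x y z : dotv x (y + z) = dotv x y + dotv x z.
Proof. by rewrite /dotv mulmxDr mxE. Qed.

Lemma dotvDl x y z : dotv (y + z) x = dotv y x + dotv z x.
Proof. by rewrite /dotv linearD /= mulmxDl mxE. Qed.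

Lemma dotvZr a x y : dotv x (a *: y) = a * dotv x y.
Proof. by rewrite /dotv -scalemxAr mxE. Qed.

Lemma dotvZl a x y : dotv (a *: x) y = a * dotv x y.
Proof. by rewrite /dotv linearZ /= -scalemxAl mxE. Qed.

Lemma dotvNr x y : dotv x (- y) = - dotv x y.
Proof. by rewrite -scaleN1r dotvZr mulN1r. Qed.

Lemma dotvNl x y : dotv (- x) y = - dotv x y.
Proof. by rewrite -scaleN1r dotvZl mulN1r. Qed.

Lemma dotvC x y : dotv x y = dotv y x.
Proof. by rewrite /dotv -[x^T *m y]trmxK trmx_mul trmxK mxE. Qed.

Lemma dotv_mulmxl (M : 'M[R]_n) x y : dotv (M *m x) y = dotv x (M^T *m y).
Proof. by rewrite /dotv trmx_mul mulmxA. Qed.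

Lemma dotv_map (S : comNzRingType) (f : {rmorphism R -> S}) x y :
  f (dotv x y) = dotv (map_mx f x) (map_mx f y).
Proof.
rewrite /dotv !mxE rmorph_sum; apply: eq_bigr => k _.
by rewrite !mxE rmorphM.
Qed.

End Dot.

Lemma sqnorm_gt0 (R : realDomainType) n (d : 'cV[R]_n) : d != 0 -> 0 < sqnorm d.
Proof.
have sq_ge0 i : 0 <= d^T 0 i * d i 0 by rewrite mxE -expr2 sqr_ge0.
move=> d_neq0; rewrite /sqnorm /dotv mxE lt_def sumr_ge0 // andbT.
apply: contra d_neq0 => /eqP /(psumr_eq0P (fun i _ => sq_ge0 i)) d0.
apply/eqP/matrixP => i j; rewrite (ord1 j) mxE.
by have /eqP := d0 i isT; rewrite mxE -expr2 sqrf_eq0 => /eqP.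
Qed.

Lemma unitmx_eigenvalue0 (F : fieldType) n (A : 'M[F]_n) :
  ~~ eigenvalue A 0 -> A \in unitmx.
Proof.
by rewrite -row_free_unit -kermx_eq0 /eigenvalue /eigenspace raddf0 subr0 negbK.
Qed.

Local Open Scope sesquilinear_scope.

Section NormalForm.
Variables (C : numClosedFieldType) (n : nat) (A : 'M[C]_n).
Hypothesis A_normal : A \is normalmx.
Local Notation P := (spectralmx A).
Local Notation D := (spectral_diag A).

Lemma eigenvalue_spectral_diag i : eigenvalue A (D 0 i).
Proof.
have P_unit := spectral_unit A.
apply/eigenvalueP; exists (row i P).
  rewrite -row_mul [X in P *m X](orthomx_spectralP A_normal) !mulmxA mulmxV // mul1mx.
  by rewrite mul_diag_mx; apply/rowP => j; rewrite !mxE.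
rewrite rowE mulmx_free_eq0 ?row_free_unit //.
by apply/eqP => /matrixP/(_ 0 i); rewrite !mxE !eqxx /= => /eqP; rewrite oner_eq0.
Qed.

(* In the eigenbasis [w := P v] both forms are diagonal, with weights [D 0 i] and [1]. *)
Lemma normalmx_form_le (mu : C) (v : 'cV[C]_n) :
  (forall i, D 0 i <= mu) -> (v^t* *m A *m v) 0 0 <= mu * (v^t* *m v) 0 0.
Proof.
move=> D_le; have P_unitary := spectral_unitarymx A.
pose w := P *m v.
have wE : v^t* = w^t* *m P by rewrite trmx_mul map_mxM mulmxKtV.
rewrite [in X in X <= _](orthomx_spectralP A_normal) invmx_unitary // wE.
rewrite !mulmxA mulmxtVK // -!mulmxA -/w mul_diag_mx !mxE mulr_sumr.
apply: ler_sum => i _; rewrite !mxE.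
rewrite mulrCA -subr_ge0 -mulrBl mulr_ge0 ?subr_ge0 //.
by rewrite mulrC mul_conjC_ge0.
Qed.

End NormalForm.

Section RealSymmetric.
Variables (R : rcfType) (n : nat) (A : 'M[R]_n) (mu : R).
Hypothesis A_sym : A^T = A.
Hypothesis eig_le : forall a : R, eigenvalue A a -> a <= mu.
Local Notation toC := (real_complex R).
Local Notation Ac := (map_mx toC A).

Lemma trmxC_map_real_complex m p (M : 'M[R]_(m, p)) :
  (map_mx toC M)^t* = (map_mx toC M)^T.
Proof.
by apply/matrixP => i j; rewrite !mxE conj_Creal //; apply/complex_realP; exists (M j i).
Qed.

Lemma hermsym_map_real_complex : Ac \is hermsymmx.
Proof.
apply: realsym_hermsym.
  rewrite is_hermitianmxE expr0 scale1r; apply/eqP/matrixP => i j.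
  by rewrite !mxE /= -{1}A_sym mxE.
by apply/mxOverP => i j; rewrite mxE; apply/complex_realP; exists (A i j).
Qed.

Lemma spectral_diag_map_le i : spectral_diag Ac 0 i <= toC mu.
Proof.
have A_herm := hermsym_map_real_complex.
have [k Dk] : exists k, spectral_diag Ac 0 i = toC k.
  by apply/complex_realP; move/mxOverP: (hermitian_spectral_diag_real A_herm); apply.
have := eigenvalue_spectral_diag (hermitian_normalmx A_herm) i.
by rewrite Dk eigenvalue_map lecR => /eig_le.
Qed.

Lemma realsym_form_le (d : 'cV[R]_n) : dotv d (A *m d) <= mu * sqnorm d.
Proof.
have := normalmx_form_le (hermitian_normalmx hermsym_map_real_complex)
  (map_mx toC d) spectral_diag_map_le.
by rewrite trmxC_map_real_complex -mulmxA -lecR rmorphM /sqnorm !dotv_map map_mxM.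
Qed.

End RealSymmetric.

Section Residual.
Variables (R : comNzRingType) (n : nat) (A : 'M[R]_n) (b : 'cV[R]_n).

Lemma fmapE x : fmap A b x = b - A *m x.
Proof. by rewrite /fmap /gmap addrAC subrr add0r opprB. Qed.

Lemma fmap_line x d t : fmap A b (x + t *: d) = fmap A b x - t *: (A *m d).
Proof. by rewrite !fmapE mulmxDr -scalemxAr opprD addrA. Qed.

Lemma dotv_gmap_line x d t :
  dotv d (gmap A b (x + t *: d) - x)
  = t * sqnorm d + dotv d (fmap A b x) - t * dotv d (A *m d).
Proof.
have -> : gmap A b (x + t *: d) - x = t *: d + fmap A b (x + t *: d).
  by rewrite /fmap [RHS]addrC opprD addrA subrK.
by rewrite fmap_line dotvDr dotvDr dotvNr !dotvZr addrA.
Qed.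

End Residual.

Lemma dotv_invmx_line (F : fieldType) n (A : 'M[F]_n) (r d : 'cV[F]_n) t :
  A^T = A -> A \in unitmx ->
  dotv (r - t *: (A *m d)) (invmx A *m (r - t *: (A *m d)))
  = dotv r (invmx A *m r) - 2 * t * dotv d r + t ^+ 2 * dotv d (A *m d).
Proof.
move=> A_sym A_unit.
rewrite mulmxBr -scalemxAr mulKmx // dotvDl !dotvNl !dotvDr !dotvNr !dotvZl !dotvZr.
rewrite dotv_mulmxl A_sym mulKVmx // (dotvC r d) (dotvC (A *m d) d).
ring.
Qed.

(* With [p = (t' - t) s + t a], the decrease is [(t' - t)^2 (2 s - a)]. *)
Lemma quadratic_step_le (R : realDomainType) (c p a s t t' : R) :
  a <= 2 * s -> t' * s = t * s + p - t * a ->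
  c - 2 * t' * p + t' ^+ 2 * a <= c - 2 * t * p + t ^+ 2 * a.
Proof.
move=> a_le t'E; rewrite -subr_ge0.
have pE : p = (t' - t) * s + t * a by rewrite mulrBl t'E; ring.
have -> : c - 2 * t * p + t ^+ 2 * a - (c - 2 * t' * p + t' ^+ 2 * a)
    = (t' - t) ^+ 2 * (2 * s - a) by rewrite pE; ring.
by rewrite mulr_ge0 ?sqr_ge0 ?subr_ge0.
Qed.

Theorem theorem2 (R : rcfType) (n : nat) (hn : (1 <= n)%N)
  (A : 'M[R]_n) (b : 'cV[R]_n)
  (hsym : A^T = A)
  (heig : forall a : R, eigenvalue A a -> 0 < a < 2)
  (xbar dbar : 'cV[R]_n) (hd : dbar != 0) (beta : R) :
  let x1 := xbar + beta *: dbar in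
  let betahat := dotv dbar (gmap A b x1 - xbar) / sqnorm dbar in
  let xhat := xbar + betahat *: dbar in
  normAinv A (fmap A b xhat) <= normAinv A (fmap A b x1).
Proof.
cbv zeta.
have A_unit : A \in unitmx.
  by apply: unitmx_eigenvalue0; apply/negP => /heig; rewrite ltxx.
have form_le := realsym_form_le hsym (fun a Aa => ltW (andP (heig a Aa)).2) dbar.
rewrite /normAinv !fmap_line !dotv_invmx_line //.
apply/ler_wsqrtr/(quadratic_step_le _ form_le).
by rewrite dotv_gmap_line mulfVK // gt_eqF ?sqnorm_gt0.
Qed.
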